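(* Let $X$ be a compact metric countable space and $f:X\to X$ a continuous function such that every accumulation point of $X$ is periodic. Let $p\in\mathbb N^*$ and let $b\in X$ be an isolated point. If there is a sequence $(a_n)_{n\in\mathbb N}$ in $X$ such that $f^p(a_n)\to b$, then $b$ is periodic and $\mathcal O_f(b)=\omega_f(b)=\omega_f(a_n)$ for all but finitely many $n\in\mathbb N$.
   Context: $\mathbb N^*$ denotes the set of free ultrafilters on $\mathbb N$. For $p\in\mathbb N^*$ and a sequence $(x_n)$ in $X$, $x=p\text{-}\lim_{n\to\infty}x_n$ means that for every neighborhood $V$ of $x$, $\{n\in\mathbb N: x_n\in V\}\in p$. The $p$-iterate of $f$ is $f^p(x)=p\text{-}\lim_{n\to\infty}f^n(x)$. The orbit of $x$ is $\mathcal O_f(x)=\{f^n(x):n\in\mathbb N\}$. The $\omega$-limit set $\omega_f(x)$ is the set of $y\in X$ such that $f^{n_k}(x)\to y$ for some strictly increasing sequence $(n_k)$ of naturals. A point $x$ is periodic if $f^n(x)=x$ for some $n\ge 1$. An accumulation point of $X$ is a non-isolated point. *)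

From HB Require Import structures.
From mathcomp Require Import all_boot all_order all_algebra.
From mathcomp Require Import all_classical all_reals all_analysis.
Set Implicit Arguments. Unset Strict Implicit. Unset Printing Implicit Defensive.
Import Order.TTheory GRing.Theory Num.Theory.
Local Open Scope classical_set_scope.

Definition free_ultrafilter (p : set_system nat) : Prop :=
  UltraFilter p /\ (forall A : set nat, finite_set A -> ~ p A).

Definition is_plim {X : topologicalType} (p : set_system nat) (u : nat -> X) (x : X) : Prop :=
  forall V : set X, nbhs x V -> p [set n | V (u n)].

Definition isolated_point {X : topologicalType} (x : X) : Prop := nbhs x [set x].
Definition accumulation_point {X : topologicalType} (x : X) : Prop := ~ isolated_point x.

Definition periodic_point {X : Type} (f : X -> X) (x : X) : Prop :=
  exists n : nat, (0 < n)%N /\ iter n f x = x.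

Definition orbit_set {X : Type} (f : X -> X) (x : X) : set X :=
  [set y | exists n : nat, y = iter n f x].

Definition omega_limit {X : topologicalType} (f : X -> X) (x : X) : set X :=
  [set y | exists nk : nat -> nat, {homo nk : i j / (i < j)%N} /\
            ((fun k => iter (nk k) f x) @ \oo --> y)].

From HB Require Import structures.
From mathcomp Require Import all_boot all_order all_algebra.
From mathcomp Require Import all_classical all_reals all_analysis.
Set Implicit Arguments. Unset Strict Implicit. Unset Printing Implicit Defensive.
Local Open Scope classical_set_scope.

(* Since b is isolated, f^p(a_n) = b for large n, and then {k | f^k(a_n) = b}
   belongs to the free ultrafilter p, hence is infinite.  Two hitting times
   k1 < k2 show that b is periodic with period k2 - k1 and that the orbit of
   a_n falls onto the finite, hence closed, orbit of b.  The omega-limit set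
   of any point whose orbit reaches a periodic point b is the orbit of b. *)

Section Periodic.
Variables (T : Type) (f : T -> T).

Lemma iter_periodic_mul (x : T) m q : iter m f x = x -> iter (m * q) f x = x.
Proof. by move=> fmx; rewrite mulnC iterM iter_fix. Qed.

Lemma iter_periodic_mod (x : T) m n :
  iter m f x = x -> iter n f x = iter (n %% m) f x.
Proof.
by move=> fmx; rewrite {1}(divn_eq n m) addnC iterD mulnC iter_periodic_mul.
Qed.

Lemma periodic_orbit_finite (x : T) :
  periodic_point f x -> finite_set (orbit_set f x).
Proof.
move=> [m [m_gt0 fmx]].
apply: (@sub_finite_set _ _ ((fun k => iter k f x) @` `I_m)); last first.
  exact/finite_image/finite_II.
move=> _ [n ->]; exists (n %% m); first by rewrite /= ltn_mod.
by rewrite -iter_periodic_mod.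
Qed.

Lemma periodic_point_of_iter_eq (y x : T) k1 k2 : (k1 < k2)%N ->
  iter k1 f y = x -> iter k2 f y = x -> periodic_point f x.
Proof.
move=> lt12 fk1 fk2; exists (k2 - k1)%N; split; first by rewrite subn_gt0.
by rewrite -{1}fk1 -iterD subnK // ltnW.
Qed.

End Periodic.

Section OmegaLimit.
Variables (X : topologicalType) (f : X -> X).

Lemma omega_limit_sub_closed (x : X) (C : set X) : closed C ->
  (\forall n \near \oo, C (iter n f x)) -> omega_limit f x `<=` C.
Proof.
move=> Ccl [N _ CN] y [nk [nk_incr nk_cvg]].
have nk_ge k : (k <= nk k)%N.
  by elim: k => // k IHk; exact: leq_ltn_trans IHk (nk_incr _ _ (ltnSn k)).
apply: closed_cvg Ccl _ y nk_cvg.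
by exists N => // k /= Nk; apply: CN; exact: leq_trans Nk (nk_ge k).
Qed.

Lemma orbit_sub_omega_limit (x b : X) K :
  periodic_point f b -> iter K f x = b -> orbit_set f b `<=` omega_limit f x.
Proof.
move=> [m [m_gt0 fmb]] fKx _ [i ->].
exists (fun k => i + m * k + K)%N; split.
  by move=> u v uv; rewrite ltn_add2r ltn_add2l ltn_pmul2l.
have -> : (fun k => iter (i + m * k + K) f x) = fun=> iter i f b.
  by apply: funext => k; rewrite !iterD fKx iter_periodic_mul.
exact: cvg_cst.
Qed.

Lemma omega_limit_eventually_periodic (x b : X) K :
  accessible_space X -> periodic_point f b -> iter K f x = b ->
  omega_limit f x = orbit_set f b.
Proof.
move=> acc bper fKx; apply/seteqP.
split; last exact: orbit_sub_omega_limit bper fKx.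
apply: omega_limit_sub_closed.
  exact: (accessible_finite_set_closed.1 acc) _ (periodic_orbit_finite bper).
exists K => // n /= Kn; exists (n - K)%N.
by rewrite -fKx -iterD subnK.
Qed.

End OmegaLimit.

Lemma free_ultrafilter_infinite (p : set_system nat) (A : set nat) :
  free_ultrafilter p -> p A -> infinite_set A.
Proof. by move=> [_ pfree] pA Afin; exact: pfree Afin pA. Qed.

Lemma infinite_set_nat_lt2 (A : set nat) : infinite_set A ->
  exists k1 k2, [/\ (k1 < k2)%N, A k1 & A k2].
Proof.
move=> Ainf; have [k1 Ak1] := infinite_setN0 Ainf.
have [k2 [Ak2 k2_ge]] := infinite_setN0 (infinite_setD Ainf (finite_II k1.+1)).
by exists k1, k2; split=> //; rewrite ltnNge -ltnS; apply/negP.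
Qed.

Lemma plim_iter_isolated (X : topologicalType) (f : X -> X)
    (p : set_system nat) (x b : X) :
  free_ultrafilter p -> isolated_point b -> is_plim p (fun k => iter k f x) b ->
  periodic_point f b /\ exists K, iter K f x = b.
Proof.
move=> pfree b_iso plim_b.
have [k1 [k2 [lt12 fk1 fk2]]] :=
  infinite_set_nat_lt2 (free_ultrafilter_infinite pfree (plim_b _ b_iso)).
by split; [exact: periodic_point_of_iter_eq lt12 fk1 fk2 | exists k1].
Qed.

Theorem lemma3p4 (R : realType) (X : metricType R) (f : X -> X)
  (Xcompact : compact [set: X]) (Xcountable : countable [set: X])
  (fcont : continuous f)
  (acc_periodic : forall x : X, accumulation_point x -> periodic_point f x)
  (p : set_system nat) (pfree : free_ultrafilter p)
  (b : X) (b_isolated : isolated_point b)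
  (a : nat -> X) (fpa : nat -> X)
  (fpa_def : forall n, is_plim p (fun k => iter k f (a n)) (fpa n))
  (fpa_cvg : fpa @ \oo --> b) :
  periodic_point f b /\
  exists N : nat, forall n : nat, (N <= n)%N ->
    orbit_set f b = omega_limit f b /\ omega_limit f b = omega_limit f (a n).
Proof.
have [N _ fpa_eq] := fpa_cvg _ b_isolated.
have hits n : (N <= n)%N -> periodic_point f b /\ exists K, iter K f (a n) = b.
  move=> Nn; apply: plim_iter_isolated pfree b_isolated _.
  by rewrite -(fpa_eq n Nn); exact: fpa_def.
have [b_per _] := hits N (leqnn N).
have acc : accessible_space X := hausdorff_accessible (@metric_hausdorff R X).
split=> //; exists N => n /hits [_ [K fKa]].
rewrite (omega_limit_eventually_periodic (K := 0) acc b_per erefl).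
by rewrite (omega_limit_eventually_periodic acc b_per fKa).
Qed.
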